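(* Let $m,n \ge 1$ be integers with $\gcd(m,n) > 1$ and such that $(m,n) \neq (2,2)$ (i.e., at least one of $m,n$ is different from $2$). Then the tensor product $K_m \otimes K_n$ is not a circulant graph.
   Context: Graphs have no multiple edges but may have loops. The tensor product $G \otimes H$ of graphs $G$ and $H$ has vertex set $V(G)\times V(H)$, with $(g,h)$ adjacent to $(g',h')$ if and only if $g$ is adjacent to $g'$ in $G$ and $h$ is adjacent to $h'$ in $H$. For an integer $n\ge 1$ and a set $S$ of integers, the circulant graph $C_nS$ has vertex set $\{0,1,\dots,n-1\}$, with $i$ adjacent to $j$ if and only if $i-j \equiv \pm s \pmod n$ for some $s\in S$. A graph is circulant if it is isomorphic to some $C_nS$; equivalently, if its automorphism group contains a cyclic subgroup acting transitively on the vertices. $K_n$ denotes the complete graph on $n$ vertices (no loops). *)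

From mathcomp Require Import all_boot all_order all_algebra.
Set Implicit Arguments. Unset Strict Implicit. Unset Printing Implicit Defensive.
Import GRing.Theory Num.Theory.

(* A graph (no multiple edges, loops allowed) on a finite vertex type is a
   symmetric relation [e : rel V]. *)

Definition complete_adj (n : nat) : rel 'I_n := fun i j => i != j.

Definition tensor_adj (V W : finType) (e : rel V) (f : rel W) : rel (V * W) :=
  fun x y => e x.1 y.1 && f x.2 y.2.

Definition circ_adj (N : nat) (S : int -> Prop) (i j : 'I_N) : Prop :=
  exists s : int, S s /\
    (((i%:Z - j%:Z) = s %[mod N%:Z])%Z \/ ((i%:Z - j%:Z) = - s %[mod N%:Z])%Z).

Definition is_circulant (V : finType) (e : rel V) : Prop :=
  exists (N : nat) (S : int -> Prop) (phi : V -> 'I_N),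
    (0 < N)%N /\ bijective phi /\
    forall x y : V, e x y <-> circ_adj S (phi x) (phi y).

From mathcomp Require Import all_boot all_order all_algebra zify.
Import GRing.Theory Num.Theory.
Set Implicit Arguments. Unset Strict Implicit. Unset Printing Implicit Defensive.

(* If K_m (x) K_n were circulant, the cyclic shift would pull back to an
   automorphism sg whose powers sg^k, 0 < k < mn, have no fixed point.
   In K_m (x) K_n two distinct non-adjacent vertices share exactly one
   coordinate; applying this to a vertex u and two adjacent vertices v, w, one
   in the row and one in the column of u, shows that every automorphism either
   maps rows to rows and columns to columns, or swaps them.  In the first case
   sg = al x be, and any vertex returns after lcm(ord al, ord be) < mn steps
   because gcd(m, n) > 1.  In the second case m = n and sg^2 acts on the
   vertices (a, al a) through the permutation be o al of 'I_m, so some vertex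
   returns within 2m steps, which forces m = n = 2. *)

Lemma iter_fixed_dvd (T : Type) (f : T -> T) x k l :
  iter k f x = x -> (k %| l)%N -> iter l f x = x.
Proof. by move=> fx /dvdnP[q ->]; rewrite iterM iter_fix. Qed.

Lemma ordS_subz_mod N (i j : 'I_N) :
  ((ordS i)%:Z - (ordS j)%:Z = i%:Z - j%:Z %[mod N%:Z])%Z.
Proof.
rewrite /= -!modz_nat modzDml -modzDmr modzNm modzDmr.
by rewrite !intS opprD addrACA subrr add0r.
Qed.

Lemma circ_adj_ordS N (S : int -> Prop) (i j : 'I_N) :
  circ_adj S (ordS i) (ordS j) <-> circ_adj S i j.
Proof. by rewrite /circ_adj ordS_subz_mod. Qed.

Lemma iter_ordS_fixed N k (i : 'I_N) : iter k (@ordS N) i = i -> (N %| k)%N.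
Proof.
have val_iter : val (iter k (@ordS N) i) = ((i + k) %% N)%N.
  elim: k => [|k IH] /=; first by rewrite addn0 modn_small.
  by rewrite IH -addn1 modnDml -addnA addn1.
move=> /(congr1 val); rewrite val_iter => ik.
have : (i + k == i + 0 %[mod N])%N by rewrite ik addn0 modn_small.
by rewrite eqn_modDl mod0n.
Qed.

Lemma circulant_cyclic_automorphism (V : finType) (e : rel V) :
  is_circulant e -> exists sg : V -> V,
    [/\ injective sg, forall x y, e (sg x) (sg y) = e x y
      & forall x k, iter k sg x = x -> (#|V| %| k)%N].
Proof.
move=> [N [S [phi [_ [phi_bij phi_adj]]]]].
have cardV : #|V| = N by rewrite (bij_eq_card phi_bij) card_ord.
have [psi phiK psiK] := phi_bij.
pose sg x := psi (ordS (phi x)).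
have phi_sg x : phi (sg x) = ordS (phi x) by rewrite /sg psiK.
have phi_iter k x : phi (iter k sg x) = iter k (@ordS N) (phi x).
  by elim: k => [|k IH] //=; rewrite phi_sg IH.
exists sg; split.
- by move=> x y /(congr1 phi); rewrite !phi_sg => /ordS_inj /(congr1 psi); rewrite !phiK.
- move=> x y; apply/idP/idP => /phi_adj adj; apply/phi_adj.
    by rewrite -circ_adj_ordS -!phi_sg.
  by rewrite !phi_sg circ_adj_ordS.
- by move=> x k /(congr1 phi); rewrite phi_iter cardV => /iter_ordS_fixed.
Qed.

Definition both_neq (A B : eqType) (u v : A * B) := (u.1 != v.1) && (u.2 != v.2).

Lemma nonadj_eq1 (A B : eqType) (u v : A * B) :
  u != v -> ~~ both_neq u v -> (u.1 == v.1) = (u.2 != v.2).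
Proof.
case: u v => [u1 u2] [v1 v2]; rewrite /both_neq xpair_eqE /=.
by case: (eqVneq u1 v1); case: (eqVneq u2 v2).
Qed.

Lemma nonadj_triangle_eq1 (A B : eqType) (u v w : A * B) :
  u != v -> u != w -> ~~ both_neq u v -> ~~ both_neq u w -> both_neq v w ->
  (u.1 == v.1) = (u.1 != w.1).
Proof.
move=> uv uw /(nonadj_eq1 uv) uv1 /(nonadj_eq1 uw) uw1 /andP[vw1 vw2].
case: (eqVneq u.1 v.1) uv1 vw1 => [-> _ /negPf -> //|_ /esym/negbFE/eqP uv2 _].
by rewrite uw1 uv2 vw2.
Qed.

Definition other n (b : 'I_n) : 'I_n := odflt b [pick c | c != b].

Lemma other_neq n (b : 'I_n) : (1 < n)%N -> other b != b.
Proof.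
move=> n_gt1; rewrite /other; case: pickP => [//|none] /=.
have [c cb] : exists c : 'I_n, c != b.
  have lt0 : (0 < n)%N by exact: ltnW.
  case: (eqVneq (Ordinal lt0) b) => [<-|]; last by exists (Ordinal lt0).
  by exists (Ordinal n_gt1).
by rewrite none in cb.
Qed.

Definition prod_map (A B A' B' : Type) (al : A -> A') (be : B -> B')
  (x : A * B) : A' * B' := (al x.1, be x.2).

Definition swap_map (A B A' B' : Type) (al : A -> B') (be : B -> A')
  (x : A * B) : A' * B' := (be x.2, al x.1).

Lemma prod_map_coords (A B A' B' : Type) (f : A * B -> A' * B') (a0 : A) (b0 : B) :
  (forall x y, x.1 = y.1 -> (f x).1 = (f y).1) ->
  (forall x y, x.2 = y.2 -> (f x).2 = (f y).2) ->
  f =1 prod_map (fun a => (f (a, b0)).1) (fun b => (f (a0, b)).2).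
Proof.
by move=> f1 f2 [a b]; rewrite [LHS]surjective_pairing; congr pair; [apply: f1 | apply: f2].
Qed.

Lemma swap_map_coords (A B A' B' : Type) (f : A * B -> A' * B') (a0 : A) (b0 : B) :
  (forall x y, x.2 = y.2 -> (f x).1 = (f y).1) ->
  (forall x y, x.1 = y.1 -> (f x).2 = (f y).2) ->
  f =1 swap_map (fun a => (f (a, b0)).2) (fun b => (f (a0, b)).1).
Proof.
by move=> f1 f2 [a b]; rewrite [LHS]surjective_pairing; congr pair; [apply: f1 | apply: f2].
Qed.

Lemma prod_map_inj (A B A' B' : Type) (al : A -> A') (be : B -> B') (a0 : A) (b0 : B) :
  injective (prod_map al be) -> injective al /\ injective be.
Proof.
move=> inj; split=> [a a' e | b b' e].
  by have [] : (a, b0) = (a', b0) by apply: inj; rewrite /prod_map /= e.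
by have [] : (a0, b) = (a0, b') by apply: inj; rewrite /prod_map /= e.
Qed.

Lemma swap_map_inj (A B A' B' : Type) (al : A -> B') (be : B -> A') (a0 : A) (b0 : B) :
  injective (swap_map al be) -> injective al /\ injective be.
Proof.
move=> inj; split=> [a a' e | b b' e].
  by have [] : (a, b0) = (a', b0) by apply: inj; rewrite /swap_map /= e.
by have [] : (a0, b) = (a0, b') by apply: inj; rewrite /swap_map /= e.
Qed.

Section TensorCompleteAutomorphism.
Variables (m n : nat) (sg : 'I_m * 'I_n -> 'I_m * 'I_n).
Hypotheses (m_gt1 : (1 < m)%N) (n_gt1 : (1 < n)%N) (sg_inj : injective sg)
  (sg_adj : forall x y, both_neq (sg x) (sg y) = both_neq x y).

Let same1 x y := (sg x).1 == (sg y).1.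

Lemma same1_row_col x y z :
  x.1 = y.1 -> x.2 != y.2 -> z.2 = x.2 -> z.1 != x.1 -> same1 x y = ~~ same1 x z.
Proof.
move=> xy1 xy2 zx2 zx1; apply: nonadj_triangle_eq1.
- by rewrite (inj_eq sg_inj); apply: contra xy2 => /eqP ->.
- by rewrite (inj_eq sg_inj); apply: contra zx1 => /eqP ->.
- by rewrite sg_adj /both_neq xy1 eqxx.
- by rewrite sg_adj /both_neq zx2 eqxx andbF.
- by rewrite sg_adj /both_neq -xy1 zx2 (eq_sym x.1) zx1 (eq_sym y.2) xy2.
Qed.

Let keeps_rows x := same1 x (x.1, other x.2).

Lemma same1_row x y : x.1 = y.1 -> x.2 != y.2 -> same1 x y = keeps_rows x.
Proof.
move=> xy1 xy2; pose z := (other x.1, x.2).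
have zx1 : z.1 != x.1 by exact: other_neq.
rewrite /keeps_rows (same1_row_col xy1 xy2 (erefl z.2) zx1).
by rewrite (@same1_row_col x (x.1, other x.2) z) // eq_sym other_neq.
Qed.

Lemma same1_col x y : x.2 = y.2 -> x.1 != y.1 -> same1 x y = ~~ keeps_rows x.
Proof.
move=> xy2 xy1; rewrite /keeps_rows (@same1_row_col x (x.1, other x.2) y) ?negbK 1?eq_sym //.
exact: other_neq.
Qed.

Lemma keeps_rows_const x y : keeps_rows x = keeps_rows y.
Proof.
have eq_pair (u v : 'I_m * 'I_n) : u.1 = v.1 -> u.2 = v.2 -> u = v.
  by case: u v => [? ?] [? ?] /= -> ->.
have kept_row u v : u.1 = v.1 -> keeps_rows u = keeps_rows v.
  move=> uv1; case: (eqVneq u.2 v.2) => [uv2|uv2]; first by rewrite (eq_pair u v).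
  rewrite -(same1_row uv1 uv2) -(same1_row (esym uv1)) 1?eq_sym //.
  by rewrite /same1 eq_sym.
have kept_col u v : u.2 = v.2 -> keeps_rows u = keeps_rows v.
  move=> uv2; case: (eqVneq u.1 v.1) => [uv1|uv1]; first by rewrite (eq_pair u v).
  apply: negb_inj; rewrite -(same1_col uv2 uv1) -(same1_col (esym uv2)) 1?eq_sym //.
  by rewrite /same1 eq_sym.
by rewrite (@kept_col _ (y.1, x.2)) // (@kept_row _ y).
Qed.

Lemma same1_eq2 x y : x != y -> ~~ both_neq x y -> same1 x y = ((sg x).2 != (sg y).2).
Proof. by move=> xy nxy; apply: nonadj_eq1; rewrite ?(inj_eq sg_inj) ?sg_adj. Qed.

Lemma sg_row x y : x.1 = y.1 ->
  if keeps_rows x then (sg x).1 = (sg y).1 else (sg x).2 = (sg y).2.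
Proof.
move=> xy1; case: (eqVneq x.2 y.2) => [xy2|xy2].
  have -> : x = y by case: x y xy1 xy2 => [? ?] [? ?] /= -> ->.
  by case: keeps_rows.
have xy : x != y by apply: contraNneq xy2 => ->.
have nadj : ~~ both_neq x y by rewrite /both_neq xy1 eqxx.
have := same1_row xy1 xy2; case: keeps_rows => [/eqP //|].
by rewrite (same1_eq2 xy nadj) => /negbFE/eqP.
Qed.

Lemma sg_col x y : x.2 = y.2 ->
  if keeps_rows x then (sg x).2 = (sg y).2 else (sg x).1 = (sg y).1.
Proof.
move=> xy2; case: (eqVneq x.1 y.1) => [xy1|xy1].
  have -> : x = y by case: x y xy1 xy2 => [? ?] [? ?] /= -> ->.
  by case: keeps_rows.
have xy : x != y by apply: contraNneq xy1 => ->.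
have nadj : ~~ both_neq x y by rewrite /both_neq xy2 eqxx andbF.
have := same1_col xy2 xy1; case: keeps_rows => [|/eqP //].
by rewrite (same1_eq2 xy nadj) => /negbFE/eqP.
Qed.

Lemma tensor_complete_aut_split :
  (exists (al : 'I_m -> 'I_m) (be : 'I_n -> 'I_n),
     [/\ injective al, injective be & sg =1 prod_map al be]) \/
  (exists (al : 'I_m -> 'I_n) (be : 'I_n -> 'I_m),
     [/\ injective al, injective be & sg =1 swap_map al be]).
Proof.
pose a0 := Ordinal (ltnW m_gt1); pose b0 := Ordinal (ltnW n_gt1).
have kept x : keeps_rows x = keeps_rows (a0, b0) by exact: keeps_rows_const.
case k0: (keeps_rows (a0, b0)); [left | right].
- have row1 x y : x.1 = y.1 -> (sg x).1 = (sg y).1 by move/sg_row; rewrite kept k0.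
  have col2 x y : x.2 = y.2 -> (sg x).2 = (sg y).2 by move/sg_col; rewrite kept k0.
  have sgE := prod_map_coords a0 b0 row1 col2.
  have [alI beI] := prod_map_inj a0 b0 (eq_inj sg_inj sgE).
  by do 2!eexists; split; [exact: alI | exact: beI | exact: sgE].
- have col1 x y : x.2 = y.2 -> (sg x).1 = (sg y).1 by move/sg_col; rewrite kept k0.
  have row2 x y : x.1 = y.1 -> (sg x).2 = (sg y).2 by move/sg_row; rewrite kept k0.
  have sgE := swap_map_coords a0 b0 col1 row2.
  have [alI beI] := swap_map_inj a0 b0 (eq_inj sg_inj sgE).
  by do 2!eexists; split; [exact: alI | exact: beI | exact: sgE].
Qed.

End TensorCompleteAutomorphism.

Lemma iter_prod_map (A B : Type) (al : A -> A) (be : B -> B) k x :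
  iter k (prod_map al be) x = (iter k al x.1, iter k be x.2).
Proof. by elim: k => [|k IH] /=; [case: x | rewrite IH]. Qed.

Lemma lcmn_lt_mul r s m n : (0 < r)%N -> (0 < s)%N -> (r <= m)%N -> (s <= n)%N ->
  (1 < gcdn m n)%N -> (lcmn r s < m * n)%N.
Proof.
move=> r_gt0 s_gt0 rm sn gcd_gt1.
have lcm_le : (lcmn r s <= r * s)%N.
  by rewrite dvdn_leq ?muln_gt0 ?r_gt0 // dvdn_lcm dvdn_mulr // dvdn_mull.
case: (ltngtP r m) rm => // [rm _|rm _]; first by nia.
case: (ltngtP s n) sn => // [sn _|sn _]; first by nia.
have := muln_lcm_gcd m n; rewrite rm sn; nia.
Qed.

Lemma prod_perm_short_orbit m n (al : 'I_m -> 'I_m) (be : 'I_n -> 'I_n) x :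
  injective al -> injective be -> (1 < gcdn m n)%N ->
  exists2 k, (0 < k < m * n)%N & iter k (prod_map al be) x = x.
Proof.
move=> alI beI gcd_gt1; exists (lcmn (order al x.1) (order be x.2)).
  have ord1 : (order al x.1 <= m)%N by rewrite -[X in (_ <= X)%N]card_ord max_card.
  have ord2 : (order be x.2 <= n)%N by rewrite -[X in (_ <= X)%N]card_ord max_card.
  by rewrite lcmn_gt0 !order_gt0 lcmn_lt_mul ?order_gt0.
rewrite iter_prod_map (iter_fixed_dvd (iter_order alI x.1)) ?dvdn_lcml //.
by rewrite (iter_fixed_dvd (iter_order beI x.2)) ?dvdn_lcmr //; case: x.
Qed.

Lemma swap_perm_short_orbit m n (al : 'I_m -> 'I_n) (be : 'I_n -> 'I_m) a :
  injective al -> injective be ->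
  exists2 k, (0 < k <= 2 * m)%N & iter k (swap_map al be) (a, al a) = (a, al a).
Proof.
move=> alI beI; have gaI : injective (be \o al) by exact: inj_comp.
exists (2 * order (be \o al) a).
  by rewrite muln_gt0 order_gt0 leq_mul2l /= -[X in (_ <= X)%N]card_ord max_card.
have iter2 k : iter k (iter 2 (swap_map al be)) (a, al a) =
    (iter k (be \o al) a, al (iter k (be \o al) a)).
  by elim: k => [|k IH] //=; rewrite IH.
by rewrite mulnC iterM iter2 iter_order.
Qed.

Theorem theorem2 (m n : nat) :
  (1 <= m)%N -> (1 <= n)%N -> (1 < gcdn m n)%N -> ~ (m = 2 /\ n = 2)%N ->
  ~ is_circulant (tensor_adj (@complete_adj m) (@complete_adj n)).
Proof.
move=> m_gt0 n_gt0 gcd_gt1 not22 /circulant_cyclic_automorphism[sg [sg_inj sg_adj sg_per]].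
rewrite card_prod !card_ord in sg_per.
have m_gt1 : (1 < m)%N := leq_trans gcd_gt1 (dvdn_leq m_gt0 (dvdn_gcdl m n)).
have n_gt1 : (1 < n)%N := leq_trans gcd_gt1 (dvdn_leq n_gt0 (dvdn_gcdr m n)).
pose a0 := Ordinal (ltnW m_gt1); pose b0 := Ordinal (ltnW n_gt1).
have [[al [be [alI beI sgE]]] | [al [be [alI beI sgE]]]] :=
  tensor_complete_aut_split m_gt1 n_gt1 sg_inj sg_adj.
- have [k /andP[k_gt0 k_lt] fixk] := prod_perm_short_orbit (a0, b0) alI beI gcd_gt1.
  move: fixk; rewrite -(eq_iter sgE) => /sg_per /(dvdn_leq k_gt0); lia.
- have := leq_card _ alI; have := leq_card _ beI; rewrite !card_ord => nm mn.
  have [k /andP[k_gt0 k_le] fixk] := swap_perm_short_orbit a0 alI beI.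
  move: fixk; rewrite -(eq_iter sgE) => /sg_per /(dvdn_leq k_gt0) mn_le.
  by apply: not22; nia.
Qed.
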